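(* Let $\Sigma=(I,X,\mathcal U,\phi,Y,h)$ be a forward complete control system with outputs. If $\Sigma$ is OCAG and OUGS, then $\Sigma$ is IOS.
   Context: Let $I\in\{\mathbb N_0,\mathbb R_0^+\}$. A forward complete control system with outputs $\Sigma=(I,X,\mathcal U,\phi,Y,h)$ consists of: a normed space $(X,\|\cdot\|_X)$; a vector space $U$ and a normed linear subspace $(\mathcal U,\|\cdot\|_{\mathcal U})$ of $\{u:I\to U\}$ such that for all $u\in\mathcal U,\tau\in I$, $u(\cdot+\tau)\in\mathcal U$ with $\|u(\cdot+\tau)\|_{\mathcal U}\le\|u\|_{\mathcal U}$, and for $t_2\ge t_1\ge 0$ the function $u|_{[t_1,t_2]}$ ($u$ on $[t_1,t_2]$, $0$ elsewhere) lies in $\mathcal U$ with norm $\le\|u\|_{\mathcal U}$; a map $\phi:I\times X\times\mathcal U\to X$ with $\phi(0,x,u)=x$, causality, and cocycle property $\phi(t+s,x,u)=\phi(s,\phi(t,x,u),u(t+\cdot))$; a normed space $Y$ and $h:X\times U\to Y$. Write $y(t,x,u)=h(\phi(t,x,u),u(t))$. $\mathcal K_\infty$ and $\mathcal{KL}$ are the standard comparison function classes. OCAG: $\exists\beta\in\mathcal{KL},\gamma\in\mathcal K_\infty,c\ge0$ with $\|y(t,x,u)\|_Y\le\beta(\|x\|_X+c,t)+\gamma(\|u\|_{\mathcal U})$ for all $x\in X,u\in\mathcal U,t\in I$. OUGS: $\exists\sigma,\gamma\in\mathcal K_\infty$ with $\|y(t,x,u)\|_Y\le\sigma(\|x\|_X)+\gamma(\|u\|_{\mathcal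 U})$ for all $x,u,t$. IOS: $\exists\beta\in\mathcal{KL},\gamma\in\mathcal K_\infty$ with $\|y(t,x,u)\|_Y\le\beta(\|x\|_X,t)+\gamma(\|u\|_{\mathcal U})$ for all $x,u,t$. *)

From HB Require Import structures.
From mathcomp Require Import all_boot all_order all_algebra.
From mathcomp Require Import all_classical all_reals all_analysis.
Set Implicit Arguments. Unset Strict Implicit. Unset Printing Implicit Defensive.
Import Order.TTheory GRing.Theory Num.Theory.
Import numFieldNormedType.Exports.
Local Open Scope classical_set_scope.
Local Open Scope ring_scope.

Section Defs.
Variable R : realType.

(* Comparison functions, on R_0^+ (values of f outside [0,oo) are irrelevant). *)
Definition classK (f : R -> R) : Prop :=
  {within [set x | 0 <= x], continuous f} /\ f 0 = 0 /\
  (forall x y, 0 <= x -> x < y -> f x < f y).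

Definition classKinf (f : R -> R) : Prop :=
  classK f /\ (forall M, exists x, 0 <= x /\ M < f x).

Definition classKL (beta : R -> R -> R) : Prop :=
  {within [set p : R * R | 0 <= p.1 /\ 0 <= p.2],
     continuous (fun p : R * R => beta p.1 p.2)} /\
  (forall t, 0 <= t -> classK (fun r => beta r t)) /\
  (forall r, 0 <= r ->
     (forall s t, 0 <= s -> s <= t -> beta r t <= beta r s) /\
     (beta r t @[t --> +oo] --> 0)).

Definition timeset (disc : bool) : set R :=
  if disc then [set t | exists n : nat, t = n%:R] else [set t | 0 <= t].

Variable U : lmodType R.

(* Inputs I -> U are encoded as functions R -> U vanishing outside I. *)
Definition ishift (disc : bool) (u : R -> U) (tau : R) : R -> U :=
  fun t => if `[< timeset disc t >] then u (t + tau) else 0.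

Definition irestr (disc : bool) (u : R -> U) (t1 t2 : R) : R -> U :=
  fun t => if `[< timeset disc t /\ t1 <= t <= t2 >] then u t else 0.

Definition input_space (disc : bool) (Uset : set (R -> U))
  (normU : (R -> U) -> R) : Prop :=
  [/\ (forall u, Uset u -> forall t, ~ timeset disc t -> u t = 0),
      [/\ Uset (fun _ => 0),
      (forall u v, Uset u -> Uset v -> Uset (fun t => u t + v t)) &
      (forall (a : R) u, Uset u -> Uset (fun t => a *: u t))],
      [/\ (forall u, Uset u -> 0 <= normU u),
          normU (fun _ => 0) = 0,
          (forall u, Uset u -> normU u = 0 -> u = (fun _ => 0)),
          (forall u v, Uset u -> Uset v ->
              normU (fun t => u t + v t) <= normU u + normU v) &
          (forall (a : R) u, Uset u -> normU (fun t => a *: u t) = `|a| * normU u)],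
      (forall u tau, Uset u -> timeset disc tau ->
          Uset (ishift disc u tau) /\ normU (ishift disc u tau) <= normU u) &
      (forall u t1 t2, Uset u -> 0 <= t1 -> t1 <= t2 ->
          Uset (irestr disc u t1 t2) /\ normU (irestr disc u t1 t2) <= normU u)].

(* Forward complete control system: phi is total; identity, causality, cocycle. *)
Definition control_system (disc : bool) (X : normedModType R)
  (Uset : set (R -> U)) (normU : (R -> U) -> R)
  (phi : R -> X -> (R -> U) -> X) : Prop :=
  [/\ input_space disc Uset normU,
      (forall x u, Uset u -> phi 0 x u = x),
      (forall t x u v, timeset disc t -> Uset u -> Uset v ->
          (forall s, timeset disc s -> s <= t -> u s = v s) ->
          phi t x u = phi t x v) &
      (forall t s x u, timeset disc t -> timeset disc s -> Uset u ->
          phi (t + s) x u = phi s (phi t x u) (ishift disc u t))].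

Variables (X Y : normedModType R).

Definition output (phi : R -> X -> (R -> U) -> X) (h : X -> U -> Y)
  (t : R) (x : X) (u : R -> U) : Y := h (phi t x u) (u t).

Definition OCAG disc (Uset : set (R -> U)) normU phi (h : X -> U -> Y) : Prop :=
  exists beta gamma (c : R), classKL beta /\ classKinf gamma /\ 0 <= c /\
    forall x u t, Uset u -> timeset disc t ->
      `|output phi h t x u| <= beta (`|x| + c) t + gamma (normU u).

Definition OUGS disc (Uset : set (R -> U)) normU phi (h : X -> U -> Y) : Prop :=
  exists sigma gamma, classKinf sigma /\ classKinf gamma /\
    forall x u t, Uset u -> timeset disc t ->
      `|output phi h t x u| <= sigma `|x| + gamma (normU u).

Definition IOS disc (Uset : set (R -> U)) normU phi (h : X -> U -> Y) : Prop :=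
  exists beta gamma, classKL beta /\ classKinf gamma /\
    forall x u t, Uset u -> timeset disc t ->
      `|output phi h t x u| <= beta `|x| t + gamma (normU u).

End Defs.

From HB Require Import structures.
From mathcomp Require Import all_boot all_order all_algebra.
From mathcomp Require Import all_classical all_reals all_analysis.
From mathcomp Require Import lra.
Import Order.TTheory GRing.Theory Num.Theory.
Import numFieldNormedType.Exports.
Local Open Scope classical_set_scope.
Local Open Scope ring_scope.

(* OCAG and OUGS together bound |y(t)| by
   min (beta (|x| + c) t) (sigma |x|) + gamma1 ||u|| + gamma2 ||u||.
   The offset c keeps r |-> beta (r + c) t from vanishing at 0; taking the
   minimum with sigma restores this, while the decay of beta in t survives the
   minimum, so the new gain is of class KL. *)

Lemma continuous_within_comp {T1 T2 S : topologicalType} (A : set T1) (B : set T2)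
    (g : T1 -> T2) (f : T2 -> S) :
  continuous g -> (forall x, A x -> B (g x)) -> {within B, continuous f} ->
  {within A, continuous (fun x => f (g x))}.
Proof.
move=> cg gAB /subspace_continuousP cf; apply/subspace_continuousP => x Ax P.
move=> /(cf _ (gAB _ Ax)) /cg PB.
have {}PB : nbhs x (fun y => B (g y) -> P (f (g y))) := PB.
by apply: filterS PB => y + Ay; apply; apply: gAB.
Qed.

Section comparison_functions.
Context {R : realType}.
Implicit Types (f g : R -> R) (beta : R -> R -> R).

Lemma continuous_within_min {T : topologicalType} (A : set T) (f g : T -> R) :
  {within A, continuous f} -> {within A, continuous g} ->
  {within A, continuous (fun x => Num.min (f x) (g x))}.
Proof.
by move=> cf cg x; exact: (@continuous_min R (subspace A) f g x (cf x) (cg x)).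
Qed.

Lemma classK_ge0 f x : classK f -> 0 <= x -> 0 <= f x.
Proof.
move=> [_ [f0 fi]]; rewrite le_eqVlt => /predU1P[<-|x_gt0]; first by rewrite f0.
by rewrite -f0 ltW // fi.
Qed.

Lemma classKD f g : classK f -> classK g -> classK (f \+ g).
Proof.
move=> [cf [f0 fi]] [cg [g0 gi]]; split; [|split].
- by move=> x; exact: (@continuousD R R^o (subspace _) f g x (cf x) (cg x)).
- by rewrite /= f0 g0 addr0.
- by move=> x y x_ge0 xy; apply: ltrD; [apply: fi | apply: gi].
Qed.

Lemma classKinfD f g : classKinf f -> classK g -> classKinf (f \+ g).
Proof.
move=> [fK f_unbounded] gK; split; first exact: classKD.
move=> M; have [x [x_ge0 Mfx]] := f_unbounded M; exists x; split => //=.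
by rewrite -[M]addr0 ltr_leD // classK_ge0.
Qed.

Lemma classK_min_shift f g c : classK f -> 0 <= c -> classK g ->
  classK (fun r => Num.min (f (r + c)) (g r)).
Proof.
move=> fK c_ge0 [cg [g0 gi]]; have [cf [_ fi]] := fK; split; [|split].
- apply: continuous_within_min => //.
  apply: (@continuous_within_comp R R R _ _ (+%R^~ c) f _ _ cf)
    => [r|r /= r_ge0]; last by rewrite addr_ge0.
  by apply: cvgD; [exact: cvg_id | exact: cvg_cst].
- by rewrite add0r g0; apply/min_r/classK_ge0.
- move=> x y x_ge0 xy; rewrite lt_min !gt_min gi // orbT andbT.
  by rewrite fi ?ltrD2r // addr_ge0.
Qed.

Lemma classKL_min_shift beta g c : classKL beta -> 0 <= c -> classK g ->
  classKL (fun r t => Num.min (beta (r + c) t) (g r)).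
Proof.
move=> [cbeta [betaK betaL]] c_ge0 gK; split; [|split].
- apply: continuous_within_min.
    apply: (@continuous_within_comp (R * R)%type (R * R)%type R _ _
      (fun p => (p.1 + c, p.2)) _ _ _ cbeta) => [p|p /= [p1_ge0 ->]];
      last by rewrite addr_ge0.
    apply: (@cvg_pair _ _ _ _ (nbhs (p.1 + c)) (nbhs p.2)); last exact: cvg_snd.
    by apply: cvgD; [exact: cvg_fst | exact: cvg_cst].
  apply: (@continuous_within_comp (R * R)%type R R _ _ fst _ _ _ (proj1 gK))
    => [p|p []//].
  exact: cvg_fst.
- by move=> t t_ge0; exact: classK_min_shift (betaK t t_ge0) c_ge0 gK.
- move=> r r_ge0; have rc_ge0 : 0 <= r + c by rewrite addr_ge0.
  have [beta_noninc beta_cvg0] := betaL _ rc_ge0; split.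
    by move=> s t s_ge0 st; rewrite le_min !ge_min beta_noninc ?lexx ?orbT.
  apply: (squeeze_cvgr _ (cvg_cst 0) beta_cvg0); near=> t.
  have t_ge0 : 0 <= t by near: t; apply: nbhs_pinfty_ge; rewrite real0.
  rewrite ge_min lexx andbT le_min (classK_ge0 _ _ gK r_ge0) andbT.
  exact: classK_ge0 _ _ (betaK _ t_ge0) rc_ge0.
Unshelve. all: by end_near. Qed.

End comparison_functions.

Theorem lemma9 (R : realType) (disc : bool) (X Y : normedModType R)
  (U : lmodType R) (Uset : set (R -> U)) (normU : (R -> U) -> R)
  (phi : R -> X -> (R -> U) -> X) (h : X -> U -> Y) :
  control_system disc Uset normU phi ->
  OCAG disc Uset normU phi h ->
  OUGS disc Uset normU phi h ->
  IOS disc Uset normU phi h.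
Proof.
move=> [[_ _ [normU_ge0 _ _ _ _] _ _] _ _ _].
move=> [beta [gamma1 [c [betaKL [gamma1Kinf [c_ge0 ocag]]]]]].
move=> [sigma [gamma2 [[sigmaK _] [[gamma2K _] ougs]]]].
exists (fun r t => Num.min (beta (r + c) t) (sigma r)), (gamma1 \+ gamma2).
split; first exact: classKL_min_shift.
split; first exact: classKinfD.
move=> x u t uU tI; have normu_ge0 := normU_ge0 _ uU.
have gamma1_ge0 := classK_ge0 _ _ (proj1 gamma1Kinf) normu_ge0.
have gamma2_ge0 := classK_ge0 _ _ gamma2K normu_ge0.
have ocag_xut := ocag x u t uU tI; have ougs_xut := ougs x u t uU tI.
by rewrite /= -lerBlDr le_min; apply/andP; split; lra.
Qed.
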